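(* Let $(T,X)$ be a compact flow (with $T$ a Hausdorff topological group and $X$ a compact Hausdorff space) and let $S$ be a thick subsemigroup of $T$. If $(T,X)$ is Lyapunov $S$-stable, then $(T,X)$ is an a.p. flow.
   Context: $\mathscr U_X$ is the uniformity of $X$; $\varepsilon[A]=\{y:\exists a\in A,(a,y)\in\varepsilon\}$. $S\subseteq T$ is (right) thick if for every compact $K\subseteq T$ there is $t$ with $Kt\subseteq S$; $A\subseteq T$ is (right) syndetic if there is compact $K$ with $Kt\cap A\neq\emptyset$ for all $t$. The flow is Lyapunov $S$-stable if for every $\varepsilon\in\mathscr U_X$ and every $x\in X$ there is $\delta\in\mathscr U_X$ with $t(\delta[x])\subseteq\varepsilon[tx]$ for all $t\in S$. A flow is an a.p. flow if for every $\alpha\in\mathscr U_X$ there is a syndetic $A\subseteq T$ with $Ax\subseteq\alpha[x]$ for all $x\in X$. *)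

From HB Require Import structures.
From mathcomp Require Import all_boot all_order all_algebra.
From mathcomp Require Import all_classical all_reals all_analysis.
Set Implicit Arguments. Unset Strict Implicit. Unset Printing Implicit Defensive.
Local Open Scope classical_set_scope.

Definition is_topological_group (T : topologicalType)
  (mul : T -> T -> T) (inv : T -> T) (e : T) : Prop :=
  [/\ (forall a b c, mul a (mul b c) = mul (mul a b) c),
      (forall a, mul e a = a /\ mul a e = a),
      (forall a, mul (inv a) a = e /\ mul a (inv a) = e),
      continuous (fun p : T * T => mul p.1 p.2) &
      continuous inv].

Definition is_flow (T X : topologicalType)
  (mul : T -> T -> T) (e : T) (act : T -> X -> X) : Prop :=
  [/\ (forall x, act e x = x),
      (forall s t x, act (mul s t) x = act s (act t x)) &
      continuous (fun p : T * X => act p.1 p.2)].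

Definition subsemigroup (T : Type) (mul : T -> T -> T) (S : set T) : Prop :=
  forall s t, S s -> S t -> S (mul s t).

Definition thick (T : topologicalType) (mul : T -> T -> T) (S : set T) : Prop :=
  forall K : set T, compact K -> exists t, forall k, K k -> S (mul k t).

Definition syndetic (T : topologicalType) (mul : T -> T -> T) (A : set T) : Prop :=
  exists K : set T, compact K /\ forall t, exists k, K k /\ A (mul k t).

Definition lyapunov_stable (T : Type) (X : uniformType)
  (act : T -> X -> X) (S : set T) : Prop :=
  forall eps : set (X * X), entourage eps -> forall x : X,
    exists2 delta : set (X * X), entourage delta &
      forall t, S t -> forall y, delta (x, y) -> eps (act t x, act t y).

Definition ap_flow (T : topologicalType) (X : uniformType)
  (mul : T -> T -> T) (act : T -> X -> X) : Prop :=
  forall alpha : set (X * X), entourage alpha ->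
    exists A : set T, syndetic mul A /\
      forall a x, A a -> alpha (x, act a x).

From HB Require Import structures.
From mathcomp Require Import all_boot all_order all_algebra.
From mathcomp Require Import all_classical all_reals all_analysis.
Local Open Scope classical_set_scope.

(** Fix an entourage alpha.  By Lyapunov stability and compactness of X, the
    elements of S fall into finitely many classes such that any two elements
    t, t' of the same class move every point alpha-close to each other: record
    which cell of a finite eta-net each point of a finite delta-net is sent to.
    Given distinct x_0, ..., x_n with n the number of classes, thickness yields
    u with inv(x_i) u in S for all i; two of these share a class, and then
    inv(x_j) x_i moves every point alpha-little.  Hence a maximal finite family
    F of pairwise "far apart" elements exists, and every t is within reach of
    some y in F, i.e. inv(y) t is an alpha-almost period: the almost periods
    are syndetic with compact witness inv(F). *)

(* [compact_cover] is only available for pointed spaces. *)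
Section PointedCover.
Variables (X : uniformType) (x0 : X).

Definition pointed_copy : Type := X.
HB.instance Definition _ := Uniform.copy pointed_copy X.
HB.instance Definition _ := isPointed.Build pointed_copy x0.

Lemma compact_entourage_cover_pointed (U : X -> set (X * X)) :
  compact [set: X] -> (forall z, entourage (U z)) ->
  exists zs : seq X, forall y, exists2 z, z \in zs & U z (z, y).
Proof.
move=> cX eU; have cX' : @compact pointed_copy [set: pointed_copy] by [].
move: cX'; rewrite (@compact_cover pointed_copy) => cX'.
have [D _ cov] : finite_subset_cover setT
    (fun z : pointed_copy => (@xsection pointed_copy pointed_copy (U z) z)°) setT.
  apply: cX' => [z _|y _]; first exact: open_interior.
  exists y => //; apply: nbhs_singleton; apply: nbhs_interior.
  exact: (@nbhs_entourage X y _ (eU y)).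
exists (finmap.enum_fset D) => y; have [z /= zD /interior_subset] := cov y I.
by rewrite /xsection /= inE => yz; exists z.
Qed.

End PointedCover.

Lemma compact_entourage_cover {X : uniformType} {U : X -> set (X * X)} :
  compact [set: X] -> (forall z, entourage (U z)) ->
  exists zs : seq X, forall y, exists2 z, z \in zs & U z (z, y).
Proof.
move=> cX eU; have [[x0 _]|X0] := pselect (exists x : X, True).
  exact: compact_entourage_cover_pointed.
by exists [::] => y; exfalso; apply: X0; exists y.
Qed.

Lemma entourage_split4 {X : uniformType} {A : set (X * X)} : entourage A ->
  exists2 E : set (X * X), entourage E &
    (forall a b, E (a, b) -> E (b, a)) /\
    (forall a b c d f, E (a, b) -> E (b, c) -> E (c, d) -> E (d, f) -> A (a, f)).
Proof.
move=> eA; have eB := entourage_split_ent eA; have eC := entourage_split_ent eB.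
exists (split_ent (split_ent A) `&` (split_ent (split_ent A))^-1)%relation.
  exact: entourage_invI eC.
split=> [a b [? ?]|a b c d f [ab _] [bc _] [cd _] [df _]]; first by [].
by apply: (entourage_split c eA); [apply: (entourage_split b eB)|
  apply: (entourage_split d eB)].
Qed.

Section DominatingSeq.
Context {T : eqType} {R : T -> T -> Prop} {n : nat}.
Hypothesis R_sym : forall x y, R x y -> R y x.
Hypothesis R_large : forall L : seq T, uniq L -> n < size L ->
  exists x y, [/\ x \in L, y \in L, x != y & R x y].

Definition independent (L : seq T) :=
  uniq L /\ forall x y, x \in L -> y \in L -> x != y -> ~ R x y.

Lemma independent_size L : independent L -> size L <= n.
Proof.
move=> [uL indL]; rewrite leqNgt; apply/negP => /(R_large _ uL).
by move=> [x [y [xL yL xy Rxy]]]; exact: indL xL yL xy Rxy.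
Qed.

Lemma exists_maximal_independent :
  exists F, independent F /\ forall s, s \notin F -> ~ independent (s :: F).
Proof.
pose P k := `[< exists L, independent L /\ size L = k >].
have P0 : exists k, P k.
  by exists 0; apply/asboolP; exists [::]; split=> //; split=> // x y.
have Pn k : P k -> k <= n by move=> /asboolP [L [/independent_size + <-]].
case: (ex_maxnP P0 Pn) => k /asboolP [F [indF <-]] maxF.
exists F; split=> // s sF indsF.
by have := maxF _ (asboolT (ex_intro _ _ (conj indsF erefl))); rewrite ltnn.
Qed.

Lemma exists_dominating_seq :
  exists F : seq T, forall s, s \in F \/ exists2 y, y \in F & R y s.
Proof.
have [F [[uF indF] maxF]] := exists_maximal_independent.
exists F => s; have [sF|sF] := boolP (s \in F); [by left|right].
apply: contrapT => sfar; apply: (maxF s sF); split; first by rewrite /= sF uF.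
move=> x y; rewrite !in_cons.
case/orP=> [/eqP->|xF] /orP[/eqP->|yF]; rewrite ?eqxx // => xy Rxy.
- by apply: sfar; exists y => //; exact: R_sym.
- by apply: sfar; exists x.
- exact: indF xF yF xy Rxy.
Qed.

End DominatingSeq.

Lemma lyapunov_stable_finite_classes {T : Type} {X : uniformType}
    {act : T -> X -> X} {S : set T} {alpha : set (X * X)} :
  compact [set: X] -> lyapunov_stable act S -> entourage alpha ->
  exists (P : finType) (c : T -> P), forall t t', S t -> S t' -> c t = c t' ->
    forall x, alpha (act t x, act t' x).
Proof.
move=> cX stable ealpha.
have [eta eeta [eta_sym eta4]] := entourage_split4 ealpha.
have /boolp.choice[delta delta_spec] : forall z, exists delta, entourage delta
    /\ forall t, S t -> forall y, delta (z, y) -> eta (act t z, act t y).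
  by move=> z; have [d ? ?] := stable eta eeta z; exists d.
have [zs zs_cover] := compact_entourage_cover cX (fun z => (delta_spec z).1).
have [ws ws_cover] := compact_entourage_cover cX (fun _ => eeta).
pose fits t (p : {ffun seq_sub zs -> seq_sub ws}) :=
  forall z, eta (val (p z), act t (val z)).
have /boolp.choice[c c_fits] : forall t, exists p, fits t p.
  move=> t; have wcell (z : seq_sub zs) :
      exists w : seq_sub ws, eta (val w, act t (val z)).
    by have [w wws ?] := ws_cover (act t (val z)); exists (SeqSub wws).
  by have [p pP] := boolp.choice wcell; exists (finfun p) => z; rewrite ffunE.
exists {ffun seq_sub zs -> seq_sub ws}, c => t t' St St' ctt' x.
have [z zzs zx] := zs_cover x.
have := c_fits t (SeqSub zzs); have := c_fits t' (SeqSub zzs); rewrite -ctt' /=.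
move=> w_t'z w_tz; apply: (eta4 _ (act t z) (val (c t (SeqSub zzs))) (act t' z)).
- by apply: eta_sym; exact: (delta_spec z).2.
- exact: eta_sym.
- exact: w_t'z.
- exact: (delta_spec z).2.
Qed.

Lemma flow_actK {T : topologicalType} {X : topologicalType} {mul : T -> T -> T}
    {inv : T -> T} {e : T} {act : T -> X -> X} :
  is_topological_group mul inv e -> is_flow mul e act ->
  forall g, cancel (act g) (act (inv g)).
Proof. by move=> [_ _ mV _ _] [act1 actM _] g x; rewrite -actM (mV g).1 act1. Qed.

Lemma flow_actVK {T : topologicalType} {X : topologicalType} {mul : T -> T -> T}
    {inv : T -> T} {e : T} {act : T -> X -> X} :
  is_topological_group mul inv e -> is_flow mul e act ->
  forall g, cancel (act (inv g)) (act g).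
Proof. by move=> [_ _ mV _ _] [act1 actM _] g x; rewrite -actM (mV g).2 act1. Qed.

Definition almost_periods {T X : Type} (act : T -> X -> X) (alpha : set (X * X))
  : set T := [set a | forall x, alpha (x, act a x)].

Section AlmostPeriods.
Context {T : topologicalType} {mul : T -> T -> T} {inv : T -> T}.
Context {X : uniformType} {act : T -> X -> X} {S : set T} {alpha : set (X * X)}.
Hypothesis act_mul : forall s t x, act (mul s t) x = act s (act t x).
Hypothesis actK : forall g, cancel (act g) (act (inv g)).
Hypothesis actVK : forall g, cancel (act (inv g)) (act g).

Definition mutual_almost_periods (x y : T) :=
  almost_periods act alpha (mul (inv x) y) /\
  almost_periods act alpha (mul (inv y) x).

Lemma mutual_almost_periods_sym x y :
  mutual_almost_periods x y -> mutual_almost_periods y x.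
Proof. by move=> []. Qed.

Lemma syndetic_almost_periods (F : seq T) : entourage alpha ->
  (forall s, s \in F \/ exists2 y, y \in F & mutual_almost_periods y s) ->
  syndetic mul (almost_periods act alpha).
Proof.
move=> ealpha F_dom; exists [set` map inv F].
split=> [|s]; first exact: finite_compact (finite_seq _).
have [sF|[y yF [ys _]]] := F_dom s; last by exists (inv y); rewrite /= map_f.
exists (inv s); split; first by rewrite /= map_f.
by move=> x; rewrite act_mul actK; exact: entourage_refl.
Qed.

Context {P : finType} {c : T -> P}.
Hypothesis c_spec : forall t t', S t -> S t' -> c t = c t' ->
  forall x, alpha (act t x, act t' x).

Lemma same_class_almost_period x y u :
  S (mul (inv x) u) -> S (mul (inv y) u) ->
  c (mul (inv x) u) = c (mul (inv y) u) ->
  almost_periods act alpha (mul (inv y) x).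
Proof.
move=> Sx Sy cxy z; have := c_spec _ _ Sx Sy cxy (act (inv u) (act x z)).
by rewrite !act_mul !actVK actK -act_mul.
Qed.

Lemma thick_class_collision : thick mul S ->
  forall L, uniq L -> #|P| < size L ->
  exists x y, [/\ x \in L, y \in L, x != y & mutual_almost_periods x y].
Proof.
move=> thS L uL sL.
have [u Lu] := thS [set` map inv L] (finite_compact (finite_seq _)).
have SL x : x \in L -> S (mul (inv x) u) by move=> xL; apply: Lu; rewrite /= map_f.
pose g x := c (mul (inv x) u).
have : ~~ uniq (map g L).
  apply: contraTN sL => /card_uniqP; rewrite size_map -leqNgt => <-.
  exact: max_card.
case/(uniqPn (g u)) => i [j]; rewrite size_map => -[ij jL].
have iL := ltn_trans ij jL; rewrite !(nth_map u) // => gij.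
exists (nth u L i), (nth u L j); split; rewrite ?mem_nth //.
  by rewrite nth_uniq // ltn_eqF.
have [Si Sj] := (SL _ (mem_nth u iL), SL _ (mem_nth u jL)).
by split; apply: (@same_class_almost_period _ _ u).
Qed.

End AlmostPeriods.

Theorem theorem2p9 (T : topologicalType) (mul : T -> T -> T) (inv : T -> T)
  (e : T) (X : uniformType) (act : T -> X -> X) (S : set T) :
  is_topological_group mul inv e -> hausdorff_space T ->
  compact [set: X] -> hausdorff_space X ->
  is_flow mul e act ->
  subsemigroup mul S -> thick mul S ->
  lyapunov_stable act S ->
  ap_flow mul act.
Proof.
move=> grp _ cX _ flow _ thS stable alpha ealpha.
have act_mul : forall s t x, act (mul s t) x = act s (act t x) by case: flow.
have actK := flow_actK grp flow; have actVK := flow_actVK grp flow.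
have [P [c c_spec]] := lyapunov_stable_finite_classes cX stable ealpha.
have coll := thick_class_collision act_mul actK actVK c_spec thS.
have [F F_dom] := exists_dominating_seq mutual_almost_periods_sym coll.
exists (almost_periods act alpha); split; last by [].
exact: (syndetic_almost_periods act_mul actK F ealpha F_dom).
Qed.
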